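(* Let $\rho_r\in(0,1)$, and let $R>\lambda>\rho_r$ be constants. Let $C\subseteq\{0,1\}^n$ consist of $2^{Rn}$ independent uniformly random vectors, partitioned into $2^{R'n}$ blocks $A_s$ ($s\in\{0,1\}^{R'n}$) of $2^\ell$ vectors each, where $\ell=\lambda n$ and $R'n=Rn-\ell$, and let $C_\Pi$ be the stochastic code encoding message $s$ as a uniformly random element of $A_s$. Then there is $\delta>0$ such that, with probability $1-e^{-\Omega(n)}$ over the choice of $C$, \[\mathrm{Sem}(C_\Pi)=\max_{P_{\mathbf S},\mathscr S}I\bigl(\mathbf S;\mathbf V(\mathscr S)\bigr)\le e^{-n\delta},\] where the maximum is over all distributions $P_{\mathbf S}$ on messages and all $\mathscr S\subseteq[n]$ with $|\mathscr S|=\rho_r n$.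
   Context: For a message $\mathbf S\sim P_{\mathbf S}$ with random encoding $\mathbf X$, and $\mathscr S\subseteq[n]$, $\mathbf V(\mathscr S)\in\{0,1,?\}^n$ is the string equal to $\mathbf X$ on coordinates in $\mathscr S$ and $?$ elsewhere. *)

From HB Require Import structures.
From Stdlib Require Import Reals ClassicalDescription.
From mathcomp Require Import all_boot.

Set Implicit Arguments.
Unset Strict Implicit.
Unset Printing Implicit Defensive.

Open Scope R_scope.

Lemma Rplus_assoc' : associative Rplus.
Proof. by move=> x y z; rewrite Rplus_assoc. Qed.
HB.instance Definition _ :=
  Monoid.isComLaw.Build R 0 Rplus Rplus_assoc' Rplus_comm Rplus_0_l.

Definition rsum (T : finType) (f : T -> R) : R := \big[Rplus/0]_(x : T) f x.

Definition log2 (x : R) : R := (ln x / ln 2).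

Definition nfloor (x : R) : nat := Z.to_nat (Int_part x).

Definition bits (m : nat) := {ffun 'I_m -> bool}.
(* {0,1,?}^n : None stands for the erasure symbol ? *)
Definition obs (n : nat) := {ffun 'I_n -> option bool}.

Definition erase (n : nat) (S : {set 'I_n}) (x : bits n) : obs n :=
  [ffun i => if i \in S then Some (x i) else None].

(* A code C of 2^(k+l) vectors of {0,1}^n, partitioned into 2^k blocks
   A_s = { C (s,u) | u in {0,1}^l }, s in {0,1}^k, of 2^l vectors each. *)
Definition code (n k l : nat) := {ffun (bits k * bits l) -> bits n}.

Definition is_dist (T : finType) (P : T -> R) : Prop :=
  (forall x, 0 <= P x) /\ rsum P = 1.

(* Joint law of (S, V(S)) for the stochastic code C_Pi: the message s is
   encoded as C(s,U) with U uniform on {0,1}^l (a uniform element of A_s). *)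
Definition joint (n k l : nat) (C : code n k l) (P : bits k -> R)
  (S : {set 'I_n}) (s : bits k) (v : obs n) : R :=
  (P s * (INR #|[set u : bits l | erase S (C (s, u)) == v]| / pow 2 l)).

Definition marg_V (n k l : nat) (C : code n k l) (P : bits k -> R)
  (S : {set 'I_n}) (v : obs n) : R :=
  rsum (fun s => joint C P S s v).

(* mutual information I(S; V(S)) in bits, with 0 log 0 = 0 *)
Definition mutinfo (n k l : nat) (C : code n k l) (P : bits k -> R)
  (S : {set 'I_n}) : R :=
  rsum (fun sv : bits k * obs n =>
    let j := joint C P S sv.1 sv.2 in
    if Req_EM_T j 0 then 0
    else (j * log2 (j / (P sv.1 * marg_V C P S sv.2)))).

(* Sem(C_Pi) <= b, where Sem(C_Pi) = max over P_S and over S with |S| = r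
   of I(S; V(S)). *)
Definition Sem_le (n k l : nat) (C : code n k l) (r : nat) (b : R) : Prop :=
  forall (P : bits k -> R) (S : {set 'I_n}),
    is_dist P -> #|S| = r -> (mutinfo C P S <= b).

(* probability of an event over a uniformly random code
   (all 2^(k+l) codewords independent uniform in {0,1}^n) *)
Definition Prob_code (n k l : nat) (E : code n k l -> Prop) : R :=
  (rsum (fun C : code n k l => if excluded_middle_informative (E C) then 1 else 0)
   / INR #|{: code n k l}|).

(* Fix a message s, an erasure set S of size r = rho_r n and a pattern v on S.
   The block A_s consists of 2^l independent uniform words, each consistent with
   v with probability 2^-r, so by a Chernoff bound the number of them consistent
   with v is (1 +- eps) 2^(l-r), except with probability about
   exp (- eps^2 2^(l-r)).  As l - r grows linearly in n, eps = exp (- n d) can be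
   taken exponentially small while a union bound over all (s, S, v) still leaves
   a failure probability below exp (- n).  Outside that event
   P (V(S) = v | S = s) lies within a factor (1 +- eps) of 2^-r for every s, so
   each term of I(S; V(S)) has a log-ratio of order eps. *)

From HB Require Import structures.
From Stdlib Require Import Reals Lra ZArith Classical ClassicalDescription.
From mathcomp Require Import all_boot.
Open Scope R_scope.

Set Implicit Arguments.
Unset Strict Implicit.
Unset Printing Implicit Defensive.

Lemma Rmult_assoc' : associative Rmult.
Proof. by move=> x y z; rewrite Rmult_assoc. Qed.
HB.instance Definition _ :=
  Monoid.isComLaw.Build R 1 Rmult Rmult_assoc' Rmult_comm Rmult_1_l.
Lemma Rmult_0_l' : left_zero 0 Rmult. Proof. exact: Rmult_0_l. Qed.
Lemma Rmult_0_r' : right_zero 0 Rmult. Proof. exact: Rmult_0_r. Qed.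
HB.instance Definition _ := Monoid.isMulLaw.Build R 0 Rmult Rmult_0_l' Rmult_0_r'.
Lemma Rmult_plus_distr_r' : left_distributive Rmult Rplus.
Proof. by move=> x y z; ring. Qed.
Lemma Rmult_plus_distr_l' : right_distributive Rmult Rplus.
Proof. by move=> x y z; ring. Qed.
HB.instance Definition _ :=
  Monoid.isAddLaw.Build R Rmult Rplus Rmult_plus_distr_r' Rmult_plus_distr_l'.

Section FiniteSums.
Variable T : finType.
Implicit Types f g : T -> R.

Lemma rsum_ext f g : (forall x, f x = g x) -> rsum f = rsum g.
Proof. by move=> h; apply: eq_bigr => x _. Qed.

Lemma rsum_le f g : (forall x, f x <= g x) -> rsum f <= rsum g.
Proof. by move=> h; apply: big_ind2 => //; [lra | move=> *; lra]. Qed.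

Lemma rsum_ge0 f : (forall x, 0 <= f x) -> 0 <= rsum f.
Proof. by move=> h; apply: big_ind => //; [lra | move=> *; lra]. Qed.

Lemma rsum_add f g : rsum (fun x => f x + g x) = rsum f + rsum g.
Proof. exact: big_split. Qed.

Lemma rsum_scal f c : rsum (fun x => c * f x) = c * rsum f.
Proof. by rewrite /rsum big_distrr. Qed.

Lemma rsum_const c : rsum (fun _ : T => c) = INR #|T| * c.
Proof.
rewrite /rsum big_const; elim: #|T| => [|m IH]; first by rewrite /=; lra.
by rewrite iterS IH S_INR /=; lra.
Qed.

Lemma rsum_if (P : pred T) c :
  rsum (fun x => if P x then c else 0) = INR #|P| * c.
Proof.
rewrite /rsum -big_mkcond big_const.
elim: #|P| => [|m IH]; first by rewrite /=; lra.
by rewrite iterS IH S_INR /=; lra.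
Qed.

Lemma rsum_ge_term f x : (forall y, 0 <= f y) -> f x <= rsum f.
Proof.
move=> h; rewrite /rsum (bigD1 x) //=.
have : 0 <= \big[Rplus/0]_(y | y != x) f y by apply: big_ind => //; [lra | move=> *; lra].
lra.
Qed.

Lemma INR_sum (F : T -> nat) : INR (\sum_x F x) = rsum (fun x => INR (F x)).
Proof. exact: (big_morph INR plus_INR (Logic.eq_refl _)). Qed.

Lemma rsum_dist_ge (P : T -> R) f a :
  is_dist P -> (forall x, a <= f x) -> a <= rsum (fun x => P x * f x).
Proof.
move=> [P0 P1] h; rewrite -[a]Rmult_1_l -P1 Rmult_comm -rsum_scal.
by apply: rsum_le => x; rewrite Rmult_comm; apply: Rmult_le_compat_l.
Qed.

End FiniteSums.

Lemma prod_const (T : finType) (a : R) : \big[Rmult/1]_(x : T) a = a ^ #|T|.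
Proof. by rewrite big_const; elim: #|T| => [|m IH] //=; rewrite IH. Qed.

Lemma exp_le_exp x y : x <= y -> exp x <= exp y.
Proof. by case=> [/exp_increasing/Rlt_le | ->]; [|lra]. Qed.

Lemma pow_le_exp z L : 0 <= 1 + z -> (1 + z) ^ L <= exp (INR L * z).
Proof.
move=> hz; elim: L => [|L IH]; first by rewrite /= Rmult_0_l exp_0; lra.
rewrite S_INR Rmult_plus_distr_r Rmult_1_l exp_plus /= Rmult_comm.
by apply: Rmult_le_compat => //; [exact: pow_le | exact: exp_ineq1_le].
Qed.

Lemma exp_le_quadratic t : 0 <= t <= 1/2 -> exp t <= 1 + t + 2 * t ^ 2.
Proof.
move=> ht; have h1 := exp_ineq1_le (- t).
have h2 : exp t * exp (- t) = 1 by rewrite -exp_plus Rplus_opp_r exp_0.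
have h3 := exp_pos t.
nra.
Qed.

Lemma exp_opp_le_quadratic t : 0 <= t -> exp (- t) <= 1 - t + t ^ 2.
Proof.
move=> ht; have h1 := exp_ineq1_le (t / 2).
have h2 : exp t = exp (t / 2) * exp (t / 2) by rewrite -exp_plus; f_equal; field.
have h3 : exp t * exp (- t) = 1 by rewrite -exp_plus Rplus_opp_r exp_0.
have h4 := exp_pos (- t).
have h5 : (1 + t / 2) * (1 + t / 2) <= exp t by rewrite h2; apply: Rmult_le_compat; lra.
nra.
Qed.

Lemma sqr_div4_le_exp x : 0 <= x -> x ^ 2 / 4 <= exp x.
Proof.
move=> hx; have h := exp_ineq1_le (x / 2).
have -> : exp x = exp (x / 2) * exp (x / 2) by rewrite -exp_plus; f_equal; field.
nra.
Qed.

Lemma eight_exp_opp_le x : 14 <= x -> 8 * exp (- x) <= exp (- (x / 2)).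
Proof.
move=> hx; have h := exp_ineq1_le (x / 2).
have -> : exp (- (x / 2)) = exp (- x) * exp (x / 2) by rewrite -exp_plus; f_equal; field.
by have := exp_pos (- x); nra.
Qed.

Lemma ln_le_sub1 x : 0 < x -> ln x <= x - 1.
Proof. by move=> hx; have := exp_ineq1_le (ln x); rewrite exp_ln //; lra. Qed.

Lemma pow2_exp m : 2 ^ m = exp (INR m * ln 2).
Proof. by rewrite -ln_pow ?exp_ln //; [apply: pow_lt|]; lra. Qed.

Lemma Rdiv_le_mul_r a b c : 0 < b -> a / b <= c -> a <= c * b.
Proof.
move=> hb /(Rmult_le_compat_r b _ _ (Rlt_le _ _ hb)).
by rewrite /Rdiv Rmult_assoc Rinv_l; lra.
Qed.

Lemma INR_expn a b : INR (a ^ b)%N = INR a ^ b.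
Proof. by elim: b => [|b IH] //=; rewrite expnS mult_INR IH. Qed.

Lemma nfloor_spec x : 0 <= x -> INR (nfloor x) <= x < INR (nfloor x) + 1.
Proof.
move=> hx; have [h1 h2] := base_Int_part x.
have hz : (0 <= Int_part x)%Z.
  by apply/Zlt_succ_le/lt_IZR; rewrite /Z.succ plus_IZR /=; lra.
rewrite /nfloor INR_IZR_INZ Z2Nat.id //; lra.
Qed.

Lemma INR_eventually_ge M : exists N, forall n, (N <= n)%N -> M <= INR n.
Proof.
have [_ hM] := nfloor_spec (Rmax_r M 0).
exists (nfloor (Rmax M 0)).+1 => n /leP/le_INR; rewrite S_INR.
by have := Rmax_l M 0; lra.
Qed.

(** * Uniformly random codes *)

Definition Eunif (T : finType) (f : T -> R) : R := rsum f / INR #|T|.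

Section UniformExpectation.
Variable T : finType.
Implicit Types f g : T -> R.

Lemma Eunif_inv_ge0 : 0 <= / INR #|T|.
Proof.
case: (posnP #|T|) => [->|hT]; first by rewrite Rinv_0; lra.
by apply/Rlt_le/Rinv_0_lt_compat/lt_0_INR/ltP.
Qed.

Lemma Eunif_ext f g : (forall x, f x = g x) -> Eunif f = Eunif g.
Proof. by move=> h; rewrite /Eunif (rsum_ext h). Qed.

Lemma Eunif_le f g : (forall x, f x <= g x) -> Eunif f <= Eunif g.
Proof. by move=> h; apply/Rmult_le_compat_r/rsum_le; [exact: Eunif_inv_ge0|]. Qed.

Lemma Eunif_add f g : Eunif (fun x => f x + g x) = Eunif f + Eunif g.
Proof. by rewrite /Eunif rsum_add /Rdiv Rmult_plus_distr_r. Qed.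

Lemma Eunif_scal f c : Eunif (fun x => c * f x) = c * Eunif f.
Proof. by rewrite /Eunif rsum_scal /Rdiv Rmult_assoc. Qed.

Lemma Eunif_const c : (0 < #|T|)%N -> Eunif (fun _ : T => c) = c.
Proof.
move=> hT; rewrite /Eunif rsum_const; field.
by apply/not_0_INR/eqP; rewrite -lt0n.
Qed.

End UniformExpectation.

Lemma Eunif_rsum (T U : finType) (F : T -> U -> R) :
  Eunif (fun y => rsum (fun x => F x y)) = rsum (fun x => Eunif (F x)).
Proof.
rewrite /Eunif {1}/rsum exchange_big /Rdiv Rmult_comm -rsum_scal.
by apply: rsum_ext => x; rewrite Rmult_comm.
Qed.

Lemma Prob_codeE n k l (E : code n k l -> Prop) :
  Prob_code E = Eunif (fun C => if excluded_middle_informative (E C) then 1 else 0).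
Proof. by []. Qed.

Lemma Prob_code_markov n k l (E : code n k l -> Prop) (Phi : code n k l -> R) :
  (forall C, 0 <= Phi C) -> (forall C, ~ E C -> 1 <= Phi C) ->
  1 - Eunif Phi <= Prob_code E.
Proof.
move=> Phi0 Phi1; rewrite Prob_codeE.
have hcard : (0 < #|code n k l|)%N by rewrite card_ffun expn_gt0 card_ffun expn_gt0 card_bool.
have -> : 1 - Eunif Phi = Eunif (fun C => 1 + -1 * Phi C).
  by rewrite Eunif_add Eunif_scal Eunif_const //; ring.
apply: Eunif_le => C.
case: excluded_middle_informative => hE /=; first by have := Phi0 C; lra.
by have := Phi1 C hE; lra.
Qed.

Lemma Prob_code_mono n k l (E E' : code n k l -> Prop) :
  (forall C, E C -> E' C) -> Prob_code E <= Prob_code E'.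
Proof.
move=> hE; rewrite !Prob_codeE; apply: Eunif_le => C.
do 2 case: excluded_middle_informative => /=; try lra.
by move=> hE' /hE.
Qed.

Lemma card_bitsR m : INR #|bits m| = 2 ^ m.
Proof. by rewrite card_ffun INR_expn card_bool card_ord. Qed.

Lemma card_setsR n : INR #|{set 'I_n}| = 2 ^ n.
Proof.
have -> : #|{set 'I_n}| = #|powerset [set: 'I_n]|.
  by rewrite -cardsT; apply: eq_card => A; rewrite !inE subsetT.
by rewrite card_powerset cardsT card_ord INR_expn.
Qed.

Lemma Eunif_ffun_prod (I J : finType) (g : I -> J -> R) :
  Eunif (fun f : {ffun I -> J} => \big[Rmult/1]_i g i (f i))
  = \big[Rmult/1]_i Eunif (g i).
Proof.
rewrite /Eunif /rsum -bigA_distr_bigA card_ffun -prod_nat_const.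
rewrite (big_morph INR mult_INR (Logic.eq_refl _)) /Rdiv.
by rewrite (big_morph Rinv Rinv_mult Rinv_1) -big_split.
Qed.

Lemma prod_block (I J : finType) (s : I) (F : J -> R) :
  \big[Rmult/1]_(p : I * J) (if p.1 == s then F p.2 else 1) = \big[Rmult/1]_j F j.
Proof.
rewrite -(pair_bigA _ (fun i j => if i == s then F j else 1)) (bigD1 s) //=.
rewrite eqxx [X in _ * X]big1 ?Rmult_1_r // => i /negbTE hi.
by apply: big1 => j _; rewrite hi.
Qed.

Lemma Eunif_block_prod n k l (s : bits k) (h : bits l -> bits n -> R) :
  Eunif (fun C : code n k l => \big[Rmult/1]_u h u (C (s, u)))
  = \big[Rmult/1]_u Eunif (h u).
Proof.
pose g (p : bits k * bits l) (y : bits n) := if p.1 == s then h p.2 y else 1.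
rewrite (@Eunif_ext _ _ (fun C : code n k l => \big[Rmult/1]_p g p (C p))); last first.
  move=> C; rewrite -(prod_block s); apply: eq_bigr => -[i u] _.
  by rewrite /g /=; case: eqP => // ->.
rewrite Eunif_ffun_prod -[RHS](prod_block s); apply: eq_bigr => p _; rewrite /g.
by case: (p.1 == s) => //; rewrite Eunif_const // card_ffun expn_gt0 card_bool.
Qed.

(** * Chernoff bounds for block counts *)

Lemma exp_card (T : finType) (A : pred T) t :
  exp (t * INR #|[set u | A u]|) = \big[Rmult/1]_u (if A u then exp t else 1).
Proof.
rewrite cardsE -sum1_card big_mkcond /=.
rewrite (big_morph (fun m => exp (t * INR m)) (id1 := 1) (op1 := Rmult) (op2 := addn)).
- apply: eq_bigr => u _; rewrite /in_mem /=.
  by case: (A u); rewrite /= ?Rmult_1_r ?Rmult_0_r ?exp_0.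
- by move=> a b; rewrite plus_INR Rmult_plus_distr_l exp_plus.
- by rewrite /= Rmult_0_r exp_0.
Qed.

(* The words of a block are independent and uniform, so the count is binomial. *)
Lemma Eunif_exp_count n k l (s : bits k) (A : pred (bits n)) t :
  Eunif (fun C : code n k l => exp (t * INR #|[set u | A (C (s, u))]|))
  = (1 + INR #|A| / 2 ^ n * (exp t - 1)) ^ (2 ^ l)%N.
Proof.
rewrite (Eunif_ext (fun C : code n k l => exp_card (fun u => A (C (s, u))) t)).
rewrite (Eunif_block_prod s (fun _ y => if A y then exp t else 1)) /=.
have -> : Eunif (fun y => if A y then exp t else 1) = 1 + INR #|A| / 2 ^ n * (exp t - 1).
  rewrite (Eunif_ext (g := fun y => 1 + (if A y then exp t - 1 else 0))); last first.
    by move=> y; case: (A y); lra.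
  rewrite Eunif_add Eunif_const ?card_ffun ?expn_gt0 ?card_bool // /Eunif rsum_if card_bitsR.
  by set c := INR #|A|; rewrite /Rdiv; ring.
by rewrite (prod_const (bits l)) card_ffun card_bool card_ord.
Qed.

Lemma Eunif_exp_count_le n k l (s : bits k) (A : pred (bits n)) t a :
  Eunif (fun C : code n k l => exp (t * (INR #|[set u | A (C (s, u))]| - a)))
  <= exp (- (t * a) + 2 ^ l * (INR #|A| / 2 ^ n) * (exp t - 1)).
Proof.
set q := INR #|A| / 2 ^ n.
have hq : 0 <= q <= 1.
  have h2n : 0 < 2 ^ n by apply: pow_lt; lra.
  have hA : INR #|A| <= 2 ^ n by rewrite -card_bitsR; apply/le_INR/leP/max_card.
  split; first by apply: Rle_mult_inv_pos => //; exact: pos_INR.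
  by apply: (Rmult_le_reg_r (2 ^ n)) => //; rewrite /q /Rdiv Rmult_assoc Rinv_l; lra.
rewrite (Eunif_ext (g := fun C : code n k l =>
  exp (- (t * a)) * exp (t * INR #|[set u | A (C (s, u))]|))); last first.
  by move=> C; rewrite -exp_plus; f_equal; ring.
rewrite Eunif_scal Eunif_exp_count -/q exp_plus.
apply: Rmult_le_compat_l; first exact/Rlt_le/exp_pos.
rewrite -(INR_expn 2 l) Rmult_assoc; apply: pow_le_exp.
by have := exp_pos t; nra.
Qed.

Lemma Eunif_count_tails n k l (s : bits k) (A : pred (bits n)) eps :
  0 < eps <= 1/2 ->
  let mu := 2 ^ l * (INR #|A| / 2 ^ n) in
  let N (C : code n k l) := INR #|[set u | A (C (s, u))]| in
  Eunif (fun C => exp (eps / 4 * (N C - (1 + eps) * mu)) +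
                  exp (- (eps / 4) * (N C - (1 - eps) * mu)))
  <= 2 * exp (- (mu * eps ^ 2 / 8)).
Proof.
move=> he mu N.
have hmu : 0 <= mu.
  apply: Rmult_le_pos; first by apply: pow_le; lra.
  by apply: Rle_mult_inv_pos; [exact: pos_INR | apply: pow_lt; lra].
have up := Eunif_exp_count_le l s A (eps / 4) ((1 + eps) * mu).
have down := Eunif_exp_count_le l s A (- (eps / 4)) ((1 - eps) * mu).
rewrite -/mu in up down.
have e1 := exp_le_quadratic (t := eps / 4) ltac:(lra).
have e2 := exp_opp_le_quadratic (t := eps / 4) ltac:(lra).
have hmu2 : 0 <= mu * eps ^ 2 by apply: Rmult_le_pos => //; exact: pow2_ge_0.
have b1 : - (eps / 4 * ((1 + eps) * mu)) + mu * (exp (eps / 4) - 1) <= - (mu * eps ^ 2 / 8).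
  have : mu * (exp (eps / 4) - 1) <= mu * (eps / 4 + 2 * (eps / 4) ^ 2).
    by apply: Rmult_le_compat_l => //; lra.
  nra.
have b2 : - (- (eps / 4) * ((1 - eps) * mu)) + mu * (exp (- (eps / 4)) - 1) <= - (mu * eps ^ 2 / 8).
  have : mu * (exp (- (eps / 4)) - 1) <= mu * (- (eps / 4) + (eps / 4) ^ 2).
    by apply: Rmult_le_compat_l => //; lra.
  nra.
rewrite Eunif_add; apply: Rle_trans (Rplus_le_compat _ _ _ _
  (Rle_trans _ _ _ up (exp_le_exp b1)) (Rle_trans _ _ _ down (exp_le_exp b2))) _.
lra.
Qed.

Lemma exp_deviation_ge1 N m eps th : 0 < th ->
  ~ ((1 - eps) * m <= N <= (1 + eps) * m) ->
  1 <= exp (th * (N - (1 + eps) * m)) + exp (- th * (N - (1 - eps) * m)).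
Proof.
move=> hth hN.
have e1 := exp_ineq1_le (th * (N - (1 + eps) * m)).
have e2 := exp_ineq1_le (- th * (N - (1 - eps) * m)).
have p1 := exp_pos (th * (N - (1 + eps) * m)).
have p2 := exp_pos (- th * (N - (1 - eps) * m)).
have [hi|lo] : (1 + eps) * m < N \/ N < (1 - eps) * m.
  case: (Rlt_le_dec ((1 + eps) * m) N) => ?; first by left.
  by case: (Rlt_le_dec N ((1 - eps) * m)) => ?; [right | exfalso; apply: hN; split].
- have : 0 <= th * (N - (1 + eps) * m) by apply: Rmult_le_pos; lra.
  lra.
- have : 0 <= - th * (N - (1 - eps) * m) by nra.
  lra.
Qed.

(** * Concentrated codes *)

Definition agree_on n (S : {set 'I_n}) (x : bits n) : pred (bits n) :=
  fun y => erase S y == erase S x.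

Lemma card_agree_on n (S : {set 'I_n}) (x : bits n) :
  #|agree_on S x| = (2 ^ (n - #|S|))%N.
Proof.
pose F (i : 'I_n) := if i \in S then pred1 (x i) else predT.
have E : agree_on S x =i (family F : pred (bits n)).
  move=> y; rewrite !inE /agree_on; apply/eqP/familyP => [h i | h].
    have := congr1 (fun f : obs n => f i) h; rewrite /erase !ffunE /F.
    by case: (i \in S) => // [[->]]; rewrite inE.
  apply/ffunP => i; rewrite /erase !ffunE; have := h i; rewrite /F.
  by case: (i \in S) => //; rewrite inE => /eqP ->.
rewrite (eq_card E) card_family foldrE big_map big_enum /=.
rewrite (eq_bigr (fun i => if i \in S then 1%N else 2%N)); last first.
  by move=> i _; rewrite /F; case: (i \in S); rewrite ?card1 ?card_bool.
rewrite (bigID (mem S)) /= big1 ?mul1n; last by move=> i ->.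
rewrite (eq_bigr (fun _ => 2%N)) ?prod_nat_const; last by move=> i /negbTE ->.
congr (_ ^ _)%N; have := cardC S; rewrite card_ord.
have -> : #|[predC S]| = #|(fun i : 'I_n => i \notin S)| by apply: eq_card.
by move=> h; rewrite -[X in (X - _)%N]h addKn.
Qed.

Lemma agree_on_frac n (S : {set 'I_n}) (x : bits n) :
  INR #|agree_on S x| / 2 ^ n = / 2 ^ #|S|.
Proof.
have hS : (#|S| <= n)%N by have := max_card (mem S); rewrite card_ord.
rewrite card_agree_on INR_expn.
have -> : 2 ^ n = 2 ^ (n - #|S|) * 2 ^ #|S|.
  by rewrite -pow_add; congr (_ ^ _); rewrite -[RHS]/(_ + _)%N subnK.
have h1 : 2 ^ (n - #|S|) <> 0 by apply: pow_nonzero; lra.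
have h2 : 2 ^ #|S| <> 0 by apply: pow_nonzero; lra.
by change (INR 2) with 2; field.
Qed.

Definition block_count n k l (C : code n k l) (s : bits k) (S : {set 'I_n}) (v : obs n) : nat :=
  #|[set u : bits l | erase S (C (s, u)) == v]|.

(* [2 ^ l / 2 ^ r] is the expected number of words of a block consistent with a
   pattern seen on [r] coordinates. *)
Definition concentrated n k l (C : code n k l) (r : nat) (eps : R) : Prop :=
  forall (s : bits k) (S : {set 'I_n}) (x : bits n), #|S| = r ->
    (1 - eps) * (2 ^ l / 2 ^ r) <= INR (block_count C s S (erase S x))
    <= (1 + eps) * (2 ^ l / 2 ^ r).

Lemma Prob_concentrated n k l r eps : 0 < eps <= 1/2 ->
  1 - 2 ^ k * 2 ^ n * 2 ^ n * (2 * exp (- (2 ^ l / 2 ^ r * eps ^ 2 / 8)))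
  <= Prob_code (fun C : code n k l => concentrated C r eps).
Proof.
move=> he; set mu := 2 ^ l / 2 ^ r; set B := 2 * exp (- (mu * eps ^ 2 / 8)).
(* Markov's inequality for both exponential moments, summed over all (s, S, x). *)
pose dev (t : bits k * {set 'I_n} * bits n) (C : code n k l) :=
  let N := INR (block_count C t.1.1 t.1.2 (erase t.1.2 t.2)) in
  if #|t.1.2| == r then exp (eps / 4 * (N - (1 + eps) * mu)) +
                        exp (- (eps / 4) * (N - (1 - eps) * mu))
  else 0.
have dev0 t C : 0 <= dev t C.
  rewrite /dev; case: (_ == _); last lra.
  by apply: Rplus_le_le_0_compat; apply/Rlt_le/exp_pos.
have Edev t : Eunif (dev t) <= B.
  case: t => [[s S] x]; rewrite /dev /=; case: eqP => hS; last first.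
    rewrite Eunif_const ?card_ffun ?expn_gt0 ?card_bool //.
    by have := exp_pos (- (mu * eps ^ 2 / 8)); rewrite /B; lra.
  have := Eunif_count_tails l s (agree_on S x) he.
  by rewrite /= agree_on_frac hS -/(Rdiv _ _) -/mu.
apply: Rle_trans (Prob_code_markov (Phi := fun C => rsum (fun t => dev t C)) _ _).
- rewrite Eunif_rsum /Rminus; apply/Rplus_le_compat_l/Ropp_le_contravar.
  apply: Rle_trans (rsum_le Edev) _.
  by rewrite rsum_const !card_prod !mult_INR !card_bitsR card_setsR; right.
- by move=> C; apply: rsum_ge0.
move=> C; rewrite /concentrated => /not_all_ex_not[s /not_all_ex_not[S /not_all_ex_not[x]]].
move=> hneg; have [hS hdev] := imply_to_and _ _ hneg.
apply: Rle_trans (@rsum_ge_term _ (dev^~ C) (s, S, x) (dev0^~ C)).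
by rewrite /dev /= hS eqxx; apply: exp_deviation_ge1 hdev; lra.
Qed.

(** * Concentrated codes are semantically secure *)

Lemma sum_card_fibers (U V : finType) (f : U -> V) :
  (\sum_(v : V) #|[set u | f u == v]|)%N = #|U|.
Proof.
rewrite -sum1_card (eq_bigr (fun v => \sum_(u : U) if f u == v then 1 else 0))%N; last first.
  by move=> v _; rewrite cardsE -sum1_card big_mkcond.
rewrite exchange_big; apply: eq_bigr => u _.
by rewrite -big_mkcond (big_pred1 (f u)) // => v; rewrite /= eq_sym.
Qed.

Lemma joint_sum n k l (C : code n k l) P S :
  is_dist P -> rsum (fun sv : bits k * obs n => joint C P S sv.1 sv.2) = 1.
Proof.
move=> [P0 P1]; rewrite /rsum -(pair_bigA _ (fun s v => joint C P S s v)) -P1.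
apply: eq_bigr => s _; rewrite /joint -big_distrr -big_distrl /=.
rewrite -/(rsum _) -INR_sum sum_card_fibers card_bitsR /Rdiv Rinv_r ?Rmult_1_r //.
by apply: pow_nonzero; lra.
Qed.

Lemma log2_ratio_le eps q a b :
  0 < eps <= 1/2 -> 0 < q -> 0 < a <= (1 + eps) * q -> (1 - eps) * q <= b ->
  log2 (a / b) <= 8 * eps.
Proof.
move=> he hq ha hb.
have hb0 : 0 < b by nra.
have hab : a / b - 1 <= 4 * eps.
  have hqb : q <= 2 * b by nra.
  apply: (Rmult_le_reg_r b) => //.
  rewrite Rmult_minus_distr_r /Rdiv Rmult_assoc Rinv_l; [nra | lra].
have hln := ln_le_sub1 (Rdiv_lt_0_compat _ _ (proj1 ha) hb0).
have hln2 := ln_lt_2.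
rewrite /log2; apply: (Rmult_le_reg_r (ln 2)); first lra.
rewrite /Rdiv Rmult_assoc Rinv_l; nra.
Qed.

Lemma concentrated_Sem_le n k l (C : code n k l) r eps :
  0 < eps <= 1/2 -> concentrated C r eps -> Sem_le C r (8 * eps).
Proof.
move=> he hC P S hP hS; have [P0 _] := hP.
have h2l : 0 < 2 ^ l by apply: pow_lt; lra.
have h2r : 0 < / 2 ^ r by apply/Rinv_0_lt_compat/pow_lt; lra.
rewrite /mutinfo -[8 * eps]Rmult_1_r -(joint_sum C S hP) -rsum_scal.
apply: rsum_le => -[s v] /=.
set p := fun s' => INR (block_count C s' S v) / 2 ^ l.
have hj : joint C P S s v = P s * p s by [].
case: Req_EM_T => [hj0 | hj0] /=; first by rewrite hj0; lra.
have : (0 < block_count C s S v)%N.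
  by rewrite lt0n; apply/eqP => h0; apply: hj0; rewrite hj /p h0 /=; lra.
case/card_gt0P => u; rewrite inE => /eqP hv.
(* P (V = v | S = s') is within (1 +- eps) 2^-r for all s', hence so is P (V = v). *)
have hp s' : (1 - eps) * / 2 ^ r <= p s' <= (1 + eps) * / 2 ^ r.
  have := hC s' S (C (s, u)) hS; rewrite hv /p.
  have e c : c * / 2 ^ r * 2 ^ l = c * (2 ^ l / 2 ^ r) by rewrite /Rdiv; ring.
  have e' : INR (block_count C s' S v) / 2 ^ l * 2 ^ l = INR (block_count C s' S v).
    by field; lra.
  by split; apply: (Rmult_le_reg_r (2 ^ l)) => //; rewrite e e'; lra.
have hp0 : 0 < p s by have := hp s; nra.
have hPs : 0 < P s.
  by case: (P0 s) => // hP0; exfalso; apply: hj0; rewrite hj -hP0; ring.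
have hmarg : (1 - eps) * / 2 ^ r <= marg_V C P S v.
  by apply: rsum_dist_ge => // s'; exact: (proj1 (hp s')).
rewrite (Rmult_comm (8 * eps)) hj; apply: Rmult_le_compat_l; first nra.
have -> : P s * p s / (P s * marg_V C P S v) = p s / marg_V C P S v.
  field; split; nra.
by apply: log2_ratio_le he h2r _ hmarg; split; [done | exact: (proj2 (hp s))].
Qed.

(** * Choice of parameters *)

Lemma union_bound_le (n k l r : nat) (Rate d : R) :
  0 < d -> 1 <= INR n -> INR k <= Rate * INR n -> 16 * (Rate + 5) <= INR n * d ^ 2 ->
  4 * (INR n * d) <= (INR l - INR r + 1) * ln 2 ->
  2 ^ k * 2 ^ n * 2 ^ n * (2 * exp (- (2 ^ l / 2 ^ r * exp (- (INR n * d)) ^ 2 / 8)))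
  <= exp (- INR n).
Proof.
move=> hd hn hk hnd hlr; have hln2 := ln_lt_2; have hln2' : ln 2 < 1.
  by rewrite -(ln_exp 1); apply: ln_increasing; [lra | have := exp_ineq1 1; lra].
set Y := 2 ^ l / 2 ^ r * exp (- (INR n * d)) ^ 2 / 8.
have hY : (Rate + 5) * INR n <= Y.
  have -> : Y = exp ((INR l - INR r) * ln 2 - 2 * (INR n * d)) / 8.
    rewrite /Y !pow2_exp /Rdiv -exp_Ropp /= Rmult_1_r -!exp_plus; do 2 f_equal; ring.
  have hexp : exp (2 * (INR n * d)) / 2 <= exp ((INR l - INR r) * ln 2 - 2 * (INR n * d)).
    have -> : exp (2 * (INR n * d)) / 2 = exp (2 * (INR n * d) - ln 2).
      by rewrite /Rminus exp_plus exp_Ropp exp_ln //; lra.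
    by apply: exp_le_exp; lra.
  have := sqr_div4_le_exp (x := 2 * (INR n * d)) ltac:(nra).
  nra.
have -> : 2 ^ k * 2 ^ n * 2 ^ n * (2 * exp (- Y)) = exp ((INR k + 2 * INR n + 1) * ln 2 - Y).
  have e2 : 2 = exp (ln 2) by rewrite exp_ln //; lra.
  by rewrite !pow2_exp [in 2 * exp _]e2 -!exp_plus; f_equal; ring.
apply: exp_le_exp; have := pos_INR k; nra.
Qed.

Lemma large_n_bounds (a d : R) : 0 <= a -> 0 < d -> exists N, forall n, (N <= n)%N ->
  [/\ 1 <= INR n, 14 <= INR n * d & a <= INR n * d ^ 2].
Proof.
move=> ha hd; have hd2 : 0 < d ^ 2 by apply: pow_lt.
have h14 : 0 <= 14 / d by apply: Rle_mult_inv_pos; lra.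
have ha' : 0 <= a / d ^ 2 by apply: Rle_mult_inv_pos.
have [N hN] := INR_eventually_ge (14 / d + a / d ^ 2 + 1).
exists N => n /hN hn; split; first lra.
- by apply: Rdiv_le_mul_r; lra.
- by apply: Rdiv_le_mul_r; lra.
Qed.

Lemma nfloor_rate_bounds (n : nat) (rho lam Rate : R) :
  0 < rho -> rho < lam -> lam < Rate ->
  INR (nfloor (Rate * INR n) - nfloor (lam * INR n))%N <= Rate * INR n /\
  (lam - rho) * INR n <= INR (nfloor (lam * INR n)) - INR (nfloor (rho * INR n)) + 1.
Proof.
move=> hr hrl hlR; have hn := pos_INR n.
have [_ hl] := @nfloor_spec (lam * INR n) ltac:(nra).
have [hr' _] := @nfloor_spec (rho * INR n) ltac:(nra).
have [hK _] := @nfloor_spec (Rate * INR n) ltac:(nra).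
by split; [apply/(Rle_trans _ _ _ _ hK)/le_INR/leP/leq_subr | lra].
Qed.

Theorem mainTheorem7 (rho_r lam Rate : R) :
  (0 < rho_r < 1) -> (rho_r < lam) -> (lam < Rate) ->
  exists delta : R, (0 < delta) /\
  exists c : R, (0 < c) /\
  exists N : nat, forall n : nat, (N <= n)%N ->
    let l := nfloor (lam * INR n) in
    let k := (nfloor (Rate * INR n) - l)%N in
    (1 - exp (- (c * INR n)) <=
     Prob_code (fun C : code n k l =>
        Sem_le C (nfloor (rho_r * INR n)) (exp (- (INR n * delta))))).
Proof.
move=> [hr0 _] hrl hlR.
(* With eps = exp (- n d), 2^(l-r) eps^2 is about exp (2 n d), which dominates the
   2^(k + 2n) terms of the union bound. *)
pose d := (lam - rho_r) * ln 2 / 4.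
have hd : 0 < d by have := ln_lt_2; rewrite /d; nra.
have [N hN] := @large_n_bounds (16 * (Rate + 5)) d ltac:(lra) hd.
exists (d / 2); split; first lra; exists 1; split; first lra.
exists N => n /hN[hn hnd hnd2] l k; set r := nfloor (rho_r * INR n).
have [hk hlr] := nfloor_rate_bounds n hr0 hrl hlR.
have heps := eight_exp_opp_le hnd.
have he : 0 < exp (- (INR n * d)) <= 1/2.
  split; first exact: exp_pos.
  by have := exp_le_exp (x := - (INR n * d / 2)) (y := 0) ltac:(lra); rewrite exp_0; lra.
apply: (Rle_trans _ _ _ _ (Rle_trans _ _ _ (Prob_concentrated n k l r he) (Prob_code_mono _))).
  rewrite Rmult_1_l; apply/Rplus_le_compat_l/Ropp_le_contravar.
  apply: (@union_bound_le n k l r Rate d) => //.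
  by move: hlr; rewrite -/l -/r /d => hlr; have := ln_lt_2; nra.
move=> C /(concentrated_Sem_le he) hC P S hP hS.
apply: (Rle_trans _ _ _ (hC P S hP hS)).
by rewrite /Rdiv -Rmult_assoc.
Qed.
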